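(* Let $G$ be a connected weighted undirected graph on $N$ vertices with positive edge weights and combinatorial Laplacian $L$. Let $P \in \mathbb{R}^{n\times N}$ be a coarsening matrix with respect to $G$, and let $P^+$ be its Moore–Penrose pseudoinverse. Then $L_c = (P^+)^\top L P^+$ is the combinatorial Laplacian of some weighted graph (with nonnegative weights) if and only if all nonzero entries of $P^+$ are equal.
   Context: The combinatorial Laplacian of a weighted graph with weights $w_{ij}\ge 0$ is $L(i,i) = \deg_i = \sum_j w_{ij}$, $L(i,j) = -w_{ij}$ for $i\ne j$. A matrix $P\in\mathbb{R}^{n\times N}$ is a coarsening matrix w.r.t. $G$ if: (a) every column of $P$ has exactly one nonzero entry and every row is nonzero (i.e., each vertex of $G$ is assigned to exactly one row); (b) for every row $r$, the subgraph of $G$ induced by the vertices $\{v_i : P(r,i)\ne 0\}$ is connected. *)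

From HB Require Import structures.
From mathcomp Require Import all_boot all_order all_algebra.
Set Implicit Arguments. Unset Strict Implicit. Unset Printing Implicit Defensive.
Import Order.TTheory GRing.Theory Num.Theory.
Local Open Scope ring_scope.

(* A weighted undirected graph on vertex set 'I_N is given by a weight
   function w with nonnegative, symmetric weights and no self-loops;
   i ~ j is an edge iff w i j > 0. *)
Definition weighted_graph (R : realFieldType) (N : nat) (w : 'I_N -> 'I_N -> R) : Prop :=
  (forall i j, 0 <= w i j) /\ (forall i j, w i j = w j i) /\ (forall i, w i i = 0).

Definition laplacian (R : realFieldType) (N : nat) (w : 'I_N -> 'I_N -> R) : 'M[R]_N :=
  \matrix_(i, j) (if i == j then \sum_(k < N) w i k else - w i j).

Definition edge (R : realFieldType) (N : nat) (w : 'I_N -> 'I_N -> R) : rel 'I_N :=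
  fun i j => 0 < w i j.

Definition connected_graph (R : realFieldType) (N : nat) (w : 'I_N -> 'I_N -> R) : Prop :=
  forall i j, connect (edge w) i j.

Definition induced_connected (R : realFieldType) (N : nat) (w : 'I_N -> 'I_N -> R)
    (S : {set 'I_N}) : Prop :=
  forall i j, i \in S -> j \in S ->
    connect (fun a b => [&& a \in S, b \in S & edge w a b]) i j.

Definition is_graph_laplacian (R : realFieldType) (n : nat) (M : 'M[R]_n) : Prop :=
  exists w : 'I_n -> 'I_n -> R, weighted_graph w /\ M = laplacian w.

Definition coarsening (R : realFieldType) (n N : nat) (w : 'I_N -> 'I_N -> R)
    (P : 'M[R]_(n, N)) : Prop :=
  (forall j : 'I_N, #|[set r : 'I_n | P r j != 0]| = 1%N) /\
  (forall r : 'I_n, exists j, P r j != 0) /\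
  (forall r : 'I_n, induced_connected w [set i : 'I_N | P r i != 0]).

Definition MP_pinv (R : realFieldType) (n N : nat) (P : 'M[R]_(n, N)) (X : 'M[R]_(N, n)) : Prop :=
  [/\ P *m X *m P = P, X *m P *m X = X, (P *m X)^T = P *m X & (X *m P)^T = X *m P].

From HB Require Import structures.
From mathcomp Require Import all_boot all_order all_algebra.
From mathcomp Require Import ring.
Import Order.TTheory GRing.Theory Num.Theory.
Set Implicit Arguments.
Unset Strict Implicit.
Unset Printing Implicit Defensive.
Local Open Scope ring_scope.

(* Each vertex lies in exactly one cluster, so the rows of P have disjoint
   supports, P P^T is a positive diagonal matrix and P^+ = P^T (P P^T)^-1.
   Thus P^+ has the support of P^T, with one nonzero entry per row, and
   q := P^+ 1 lists these entries.  Since L_c 1 = (P^+)^T L q, a Laplacian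
   L_c forces q^T L q = 1^T L_c 1 = 0, so q is constant on the connected
   graph.  Conversely, if all nonzero entries equal c, then L q = 0 gives L_c
   zero row sums, and each off-diagonal entry of L_c is a sum of terms
   c^2 L_ik with i <> k, hence nonpositive; a symmetric matrix with these two
   properties is a graph Laplacian. *)

Local Notation ones n := (const_mx 1 : 'cV_n).

Section PseudoInverse.
Variables (R : realFieldType) (n N : nat) (P : 'M[R]_(n, N)).

Section Identities.
Variable X : 'M[R]_(N, n).
Hypothesis PX : MP_pinv P X.

Lemma MP_pinv_trmxl : X *m X^T *m P^T = X.
Proof. by case: PX => _ X2 X3 _; rewrite -mulmxA -trmx_mul X3 mulmxA X2. Qed.

Lemma MP_pinv_trmxr : P^T *m X^T *m X = X.
Proof. by case: PX => _ X2 _ X4; rewrite -trmx_mul X4 X2. Qed.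

Lemma trmx_MP_pinvl : P^T *m P *m X = P^T.
Proof. by case: PX => X1 _ X3 _; rewrite -[in RHS]X1 trmx_mul X3 mulmxA. Qed.

Lemma trmx_MP_pinvr : X *m P *m P^T = P^T.
Proof. by case: PX => X1 _ _ X4; rewrite -[in RHS]X1 -[P *m X *m P]mulmxA trmx_mul X4. Qed.

End Identities.

Lemma MP_pinv_unique (X Y : 'M[R]_(N, n)) : MP_pinv P X -> MP_pinv P Y -> X = Y.
Proof.
move=> PX PY; have XPY_l : X *m P *m Y = X.
  by rewrite -{2}(MP_pinv_trmxl PX) -(trmx_MP_pinvl PY) !mulmxA MP_pinv_trmxl.
have XPY_r : X *m P *m Y = Y.
  rewrite -{2}(MP_pinv_trmxr PY) -(trmx_MP_pinvr PX) -!mulmxA.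
  by rewrite (mulmxA P^T) MP_pinv_trmxr.
by rewrite -XPY_l XPY_r.
Qed.

Lemma MP_pinv_trmx_mul (D : 'M[R]_n) :
  D^T = D -> P *m P^T *m D = 1%:M -> MP_pinv P (P^T *m D).
Proof.
move=> Dsym PPD; have PX : P *m (P^T *m D) = 1%:M by rewrite mulmxA.
split; first by rewrite PX mul1mx.
- by rewrite -mulmxA PX mulmx1.
- by rewrite PX trmx1.
by rewrite !trmx_mul trmxK Dsym mulmxA.
Qed.

End PseudoInverse.

Definition row_sqnorm (R : realFieldType) (n N : nat) (P : 'M[R]_(n, N)) : 'rV[R]_n :=
  \row_s \sum_k P s k ^+ 2.

Section CoarseningPinv.
Variables (R : realFieldType) (n N : nat) (P : 'M[R]_(n, N)).
Hypothesis Pcol1 : forall k, #|[set s | P s k != 0]| = 1%N.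
Hypothesis Prow : forall s, exists k, P s k != 0.

Lemma col_support_exists k : exists s, P s k != 0.
Proof.
have /eqP/cards1P [s supp_k] := Pcol1 k; exists s.
by have := set11 s; rewrite -supp_k inE.
Qed.

Lemma col_support_uniq k s t : P s k != 0 -> P t k != 0 -> s = t.
Proof.
have /eqP/cards1P [r supp_k] := Pcol1 k.
have in_supp u : P u k != 0 -> u = r by move=> nz; apply/set1P; rewrite -supp_k inE.
by move=> /in_supp -> /in_supp ->.
Qed.

Lemma mulmx_trmx_col_disjoint : P *m P^T = diag_mx (row_sqnorm P).
Proof.
apply/matrixP => s t; rewrite !mxE; case: eqVneq => [<-|neq_st].
  by rewrite mulr1n; apply: eq_bigr => k _; rewrite mxE expr2.
rewrite mulr0n; apply: big1 => k _; rewrite mxE.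
have [->|Psk] := eqVneq (P s k) 0; first by rewrite mul0r.
have [->|Ptk] := eqVneq (P t k) 0; first by rewrite mulr0.
by rewrite (col_support_uniq Psk Ptk) eqxx in neq_st.
Qed.

Lemma row_sqnorm_gt0 s : 0 < row_sqnorm P 0 s.
Proof.
have [k Psk] := Prow s; rewrite mxE (bigD1 k) //= ltr_wpDr //.
  by apply: sumr_ge0 => j _; rewrite sqr_ge0.
by rewrite lt_def sqrf_eq0 Psk sqr_ge0.
Qed.

Lemma MP_pinv_coarseningE (X : 'M[R]_(N, n)) :
  MP_pinv P X -> forall k s, X k s = P s k / row_sqnorm P 0 s.
Proof.
pose D := diag_mx (\row_s (row_sqnorm P 0 s)^-1).
have PPD : P *m P^T *m D = 1%:M.
  apply/matrixP => s t; rewrite mulmx_trmx_col_disjoint mul_mx_diag !mxE.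
  case: eqVneq => [->|_]; last by rewrite mulr0n mul0r.
  by rewrite mulr1n mulfV //; have := row_sqnorm_gt0 t; rewrite mxE => /lt0r_neq0.
move=> PX k s; rewrite (MP_pinv_unique PX (MP_pinv_trmx_mul (tr_diag_mx _) PPD)).
by rewrite mul_mx_diag !mxE.
Qed.

Lemma MP_pinv_coarsening_neq0 (X : 'M[R]_(N, n)) :
  MP_pinv P X -> forall k s, (X k s != 0) = (P s k != 0).
Proof.
move=> PX k s; rewrite (MP_pinv_coarseningE PX) mulf_eq0 invr_eq0.
by rewrite (gt_eqF (row_sqnorm_gt0 s)) orbF.
Qed.

End CoarseningPinv.

Section OneNonzeroPerRow.
Variables (R : realFieldType) (N n : nat) (X : 'M[R]_(N, n)).
Hypothesis Xrow_ex : forall k, exists s, X k s != 0.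
Hypothesis Xrow_uniq : forall k s t, X k s != 0 -> X k t != 0 -> s = t.

Lemma mulmx_ones_support k s : X k s != 0 -> (X *m ones n) k 0 = X k s.
Proof.
move=> Xks; rewrite mxE; under eq_bigr do rewrite mxE mulr1.
rewrite (bigD1 s) //= big1 ?addr0 // => t neq_ts.
apply/eqP; apply: contraNT neq_ts => Xkt.
by rewrite (Xrow_uniq Xkt Xks).
Qed.

Lemma nonzero_entries_eqP :
  (forall i k j l, X i j != 0 -> X k l != 0 -> X i j = X k l) <->
  (forall i k, (X *m ones n) i 0 = (X *m ones n) k 0).
Proof.
split=> [Xeq i k | ones_eq i k j l Xij Xkl].
  have [j Xij] := Xrow_ex i; have [l Xkl] := Xrow_ex k.
  by rewrite (mulmx_ones_support Xij) (mulmx_ones_support Xkl); apply: Xeq.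
by rewrite -(mulmx_ones_support Xij) -(mulmx_ones_support Xkl).
Qed.

Lemma congr_offdiag_le0 (M : 'M[R]_N) :
  (forall i k, i != k -> M i k <= 0) ->
  (forall i k j l, X i j != 0 -> X k l != 0 -> X i j = X k l) ->
  forall r s, r != s -> (X^T *m M *m X) r s <= 0.
Proof.
move=> M_offdiag Xeq r s neq_rs; rewrite mxE; apply: sumr_le0 => k _.
rewrite mxE mulr_suml; apply: sumr_le0 => i _; rewrite !mxE.
have [->|Xir] := eqVneq (X i r) 0; first by rewrite !mul0r.
have [->|Xks] := eqVneq (X k s) 0; first by rewrite mulr0.
have neq_ik : i != k.
  by apply: contraNneq neq_rs => eq_ik; rewrite eq_ik in Xir; rewrite (Xrow_uniq Xir Xks).
rewrite -(Xeq _ _ _ _ Xir Xks) mulrC mulrA -expr2 mulrC.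
by rewrite mulr_le0_ge0 ?sqr_ge0 ?M_offdiag.
Qed.

End OneNonzeroPerRow.

Section Laplacian.
Variables (R : realFieldType) (N : nat) (w : 'I_N -> 'I_N -> R).
Hypothesis Gw : weighted_graph w.

Lemma laplacian_tr : (laplacian w)^T = laplacian w.
Proof.
have [_ [wsym _]] := Gw.
by apply/matrixP => i k; rewrite !mxE eq_sym; case: eqP => [->|_]; rewrite 1?wsym.
Qed.

Lemma laplacian_offdiag_le0 i k : i != k -> laplacian w i k <= 0.
Proof. by have [wge _] := Gw; move=> neq_ik; rewrite mxE (negbTE neq_ik) oppr_le0 wge. Qed.

Lemma laplacian_mulmxE (v : 'cV[R]_N) i :
  (laplacian w *m v) i 0 = \sum_k w i k * (v i 0 - v k 0).
Proof.
have [_ [_ w0]] := Gw.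
rewrite mxE (bigD1 i) //= [RHS](bigD1 i) //= w0 mul0r add0r mxE eqxx.
under [in RHS]eq_bigr do rewrite mulrBr.
rewrite sumrB -mulr_suml (bigD1 i) //= w0 add0r; congr (_ + _).
by rewrite -sumrN; apply: eq_bigr => k neq_ki; rewrite mxE eq_sym (negbTE neq_ki) mulNr.
Qed.

Lemma laplacian_mul_const (v : 'cV[R]_N) :
  (forall i k, v i 0 = v k 0) -> laplacian w *m v = 0.
Proof.
move=> v_const; apply/matrixP => i z; rewrite (ord1 z) laplacian_mulmxE mxE.
by apply: big1 => k _; rewrite (v_const i k) subrr mulr0.
Qed.

Lemma laplacian_form_eq0_edge (v : 'cV[R]_N) :
  (v^T *m laplacian w *m v) 0 0 = 0 -> forall i k, edge w i k -> v i 0 = v k 0.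
Proof.
have [wge [wsym _]] := Gw.
pose t i k := w i k * (v i 0 - v k 0) ^+ 2.
have t_ge0 i k : 0 <= t i k by rewrite mulr_ge0 ?wge ?sqr_ge0.
have form2 : (v^T *m laplacian w *m v) 0 0 *+ 2 = \sum_i \sum_k t i k.
  rewrite -mulmxA mxE.
  under eq_bigr do rewrite mxE laplacian_mulmxE mulr_sumr.
  rewrite mulr2n [X in X + _ = _]exchange_big -big_split; apply: eq_bigr => i _.
  by rewrite -big_split; apply: eq_bigr => k _; rewrite /t (wsym k i) /=; ring.
move=> form0 i k wik.
have /eqP : t i k = 0.
  move: form2; rewrite form0 mul0rn => /esym sum0.
  have row0 : \sum_k t i k = 0.
    exact: psumr_eq0P (fun i _ => sumr_ge0 _ (fun k _ => t_ge0 i k)) sum0 _ isT.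
  exact: psumr_eq0P (fun k _ => t_ge0 i k) row0 _ isT.
by rewrite mulf_eq0 gt_eqF //= sqrf_eq0 subr_eq0 => /eqP.
Qed.

Lemma connected_laplacian_form_eq0 (v : 'cV[R]_N) :
  connected_graph w -> (v^T *m laplacian w *m v) 0 0 = 0 ->
  forall i k, v i 0 = v k 0.
Proof.
move=> Gc form0 i k.
have closed_vi : closed (edge w) [pred x | v x 0 == v i 0].
  by move=> x y /(laplacian_form_eq0_edge form0) vxy; rewrite !inE vxy.
by have := closed_connect closed_vi (Gc i k); rewrite !inE eqxx => /esym/eqP.
Qed.

End Laplacian.

Lemma graph_laplacianP (R : realFieldType) (n : nat) (M : 'M[R]_n) :
  is_graph_laplacian M <->
  [/\ M^T = M, forall r s, r != s -> M r s <= 0 & M *m ones n = 0].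
Proof.
split=> [[w [Gw ->]] | [Msym M_offdiag M1]].
  split; [exact: laplacian_tr | exact: laplacian_offdiag_le0 |].
  by apply: laplacian_mul_const => // r s; rewrite !mxE.
exists (fun r s => if r == s then 0 else - M r s); split.
  split=> [r s | ]; first by case: eqVneq => // /M_offdiag; rewrite oppr_ge0.
  split=> [r s | r]; last by rewrite eqxx.
  by rewrite eq_sym; case: eqVneq => // _; rewrite -[in LHS]Msym mxE.
apply/matrixP => r s; rewrite mxE; case: eqVneq => [<- | _]; last by rewrite opprK.
have rowsum : \sum_k M r k = 0.
  transitivity ((M *m ones n) r 0); last by rewrite M1 mxE.
  by rewrite mxE; apply: eq_bigr => k _; rewrite mxE mulr1.
rewrite (bigD1 r) //= eqxx add0r.
move: rowsum; rewrite (bigD1 r) //= => /eqP; rewrite addr_eq0 => /eqP ->.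
by rewrite -sumrN; apply: eq_bigr => k neq_kr; rewrite eq_sym (negbTE neq_kr).
Qed.

Theorem proposition2 (R : realFieldType) (N n : nat) (w : 'I_N -> 'I_N -> R)
    (P : 'M[R]_(n, N)) (Pp : 'M[R]_(N, n)) :
  weighted_graph w -> connected_graph w ->
  coarsening w P -> MP_pinv P Pp ->
  (is_graph_laplacian (Pp^T *m laplacian w *m Pp) <->
   (forall (i k : 'I_N) (j l : 'I_n), Pp i j != 0 -> Pp k l != 0 -> Pp i j = Pp k l)).
Proof.
move=> Gw Gc [Pcol1 [Prow _]] PPp.
have Pp_neq0 := MP_pinv_coarsening_neq0 Pcol1 Prow PPp.
have Pprow_ex k : exists s, Pp k s != 0.
  by have [s Psk] := col_support_exists Pcol1 k; exists s; rewrite Pp_neq0.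
have Pprow_uniq k s t : Pp k s != 0 -> Pp k t != 0 -> s = t.
  by rewrite !Pp_neq0; apply: col_support_uniq.
have entries_eqP := nonzero_entries_eqP Pprow_ex Pprow_uniq.
have Lc1 : Pp^T *m laplacian w *m Pp *m ones n = Pp^T *m (laplacian w *m (Pp *m ones n)).
  by rewrite !mulmxA.
split=> [/graph_laplacianP [_ _ Lc0] | Pp_eq].
  apply/entries_eqP/(connected_laplacian_form_eq0 Gw Gc).
  have -> : (Pp *m ones n)^T *m laplacian w *m (Pp *m ones n) =
            (ones n)^T *m (Pp^T *m laplacian w *m Pp *m ones n).
    by rewrite trmx_mul !mulmxA.
  by rewrite Lc0 mulmx0 mxE.
apply/graph_laplacianP; split.
- by rewrite !trmx_mul trmxK laplacian_tr // mulmxA.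
- by apply: congr_offdiag_le0 => // i k; apply: laplacian_offdiag_le0.
by rewrite Lc1 laplacian_mul_const ?mulmx0 //; apply/entries_eqP.
Qed.
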